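(* Let $A$ be an Archimedean semiprime $f$-algebra which is relatively uniformly complete. Then $A$ is bounded quasi-inversion closed, i.e., for every $a\in A$ with $|a|\le|a^2-a|$ there exists $a^\ast\in A$ with $a+a^\ast=aa^\ast$.
   Context: An $f$-algebra is a real associative algebra that is a vector lattice with $A_+A_+\subseteq A_+$ and such that $a\wedge b=0$ implies $ac\wedge b=ca\wedge b=0$ for all $c\in A_+$; it is semiprime if $0$ is its only nilpotent element. Relative uniform completeness is the standard notion for vector lattices. *)

From HB Require Import structures.
From mathcomp Require Import all_boot all_order all_algebra.
From mathcomp Require Import reals.
Set Implicit Arguments. Unset Strict Implicit. Unset Printing Implicit Defensive.
Import Order.TTheory GRing.Theory Num.Theory.
Local Open Scope ring_scope.

Section FAlgebra.
Variables (R : realType) (V : lmodType R).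
(* A (not necessarily unital) real algebra structure on the real vector
   space V is given by a multiplication [mul]; the vector-lattice structure
   by a partial order [le] and the supremum operation [join]. *)
Variables (mul : V -> V -> V) (le : V -> V -> Prop) (join : V -> V -> V).

Definition meet (x y : V) : V := - join (- x) (- y).
Definition absv (x : V) : V := join x (- x).

Definition is_real_algebra : Prop :=
  [/\ forall x y z, mul x (mul y z) = mul (mul x y) z,
      forall x y z, mul (x + y) z = mul x z + mul y z,
      forall x y z, mul x (y + z) = mul x y + mul x z,
      forall (c : R) x y, mul (c *: x) y = c *: mul x y
    & forall (c : R) x y, mul x (c *: y) = c *: mul x y].

Definition is_vector_lattice : Prop :=
  [/\ [/\ (forall x, le x x),
          (forall x y, le x y -> le y x -> x = y)
        & (forall x y z, le x y -> le y z -> le x z)],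
      (forall x y z, le x y -> le (x + z) (y + z)),
      (forall (c : R) x y, 0 <= c -> le x y -> le (c *: x) (c *: y))
    & forall x y, [/\ le x (join x y), le y (join x y)
                    & forall z, le x z -> le y z -> le (join x y) z]].

Definition is_f_algebra : Prop :=
  [/\ is_real_algebra, is_vector_lattice,
      (forall a b, le 0 a -> le 0 b -> le 0 (mul a b))
    & forall a b c, meet a b = 0 -> le 0 c ->
        meet (mul a c) b = 0 /\ meet (mul c a) b = 0].

(* positive powers: pow a n = a^(n+1) *)
Fixpoint pow (a : V) (n : nat) : V :=
  if n is n'.+1 then mul a (pow a n') else a.

Definition semiprime : Prop :=
  forall a, (exists n, pow a n = 0) -> a = 0.

Definition archimedean : Prop :=
  forall x y, le 0 x -> (forall n : nat, le (x *+ n) y) -> x = 0.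

Definition ru_cauchy (s : nat -> V) : Prop :=
  exists u, le 0 u /\ forall eps : R, 0 < eps -> exists N, forall n m,
    (N <= n)%N -> (N <= m)%N -> le (absv (s n - s m)) (eps *: u).

Definition ru_converges (s : nat -> V) (x : V) : Prop :=
  exists u, le 0 u /\ forall eps : R, 0 < eps -> exists N, forall n,
    (N <= n)%N -> le (absv (s n - x)) (eps *: u).

Definition ru_complete : Prop :=
  forall s, ru_cauchy s -> exists x, ru_converges s x.

Definition bounded_qi_closed : Prop :=
  forall a, le (absv a) (absv (mul a a - a)) ->
    exists a' , a + a' = mul a a'.

End FAlgebra.

From HB Require Import structures.
From mathcomp Require Import all_boot all_order all_algebra.
From mathcomp Require Import reals.
From mathcomp Require Import ring lra.
Set Implicit Arguments. Unset Strict Implicit. Unset Printing Implicit Defensive.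
Import Order.TTheory GRing.Theory Num.Theory.
Local Open Scope ring_scope.

(* Write a = p - n with p = a^+ and n = a^-. As p n = 0, the hypothesis reads
   p + n <= |(p^2 - p) + (n^2 + n)|; multiplying by p and using semiprimeness
   gives p <= |p^2 - p|, and then p^2 >= 2 p. It therefore suffices to solve
   (mu + x) b = x with 0 <= b <= 4 x, for x = n, mu = 1 and for x = p, mu = -1:
   then a' = b_p + b_n satisfies a + a' = a a'.
   Pointwise, b = sup_{0 <= s <= 1} (2 s - s^2 (mu + x)) x, since x^2 >= (1 - mu) x
   puts 1 / (mu + x) in [0, 1] on the support of x. We take for b the relatively
   uniform limit of the maxima over the grids {j / N}; (mu + x) b = x then follows
   from two Archimedean estimates, using that z |-> (mu + x) z is a positive
   lattice homomorphism on the ideal generated by x + x^2, which is where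
   semiprimeness enters. *)

Section Grid.
Context {R : archiFieldType}.

Definition gridpt (N j : nat) : R := j%:R / N%:R.

Lemma gridpt0 N : gridpt N 0 = 0.
Proof. by rewrite /gridpt mul0r. Qed.

Lemma gridptNN N : (0 < N)%N -> gridpt N N = 1.
Proof. by move=> N0; rewrite /gridpt divff // pnatr_eq0 -lt0n. Qed.

Lemma gridptS N j : gridpt N j.+1 = gridpt N j + N%:R^-1.
Proof. by rewrite /gridpt -natr1 mulrDl mul1r. Qed.

Lemma gridpt_itv N j : (0 < N)%N -> (j <= N)%N -> 0 <= gridpt N j <= 1.
Proof.
move=> N0 jN; rewrite /gridpt divr_ge0 ?ler0n //=.
by rewrite ler_pdivrMr ?ltr0n // mul1r ler_nat.
Qed.

Lemma gridpt_approx N s : (0 < N)%N -> 0 <= s <= 1 ->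
  exists2 j, (j <= N)%N & gridpt N j <= s <= gridpt N j + N%:R^-1.
Proof.
move=> N0 /andP[s0 s1]; have n0 : 0 < N%:R :> R by rewrite ltr0n.
have sN0 : 0 <= s * N%:R by rewrite mulr_ge0 // ltW.
have /andP[jle jgt] := truncn_itv sN0.
exists (Num.truncn (s * N%:R)).
  by rewrite -(ler_nat R); apply: le_trans jle _; rewrite ler_piMl // ltW.
apply/andP; split; first by rewrite /gridpt ler_pdivrMr.
by rewrite -gridptS /gridpt ler_pdivlMr // ltW.
Qed.

Lemma two_div_nat_le_eventually (e : R) : 0 < e ->
  exists2 n, (0 < n)%N & forall m, (n <= m)%N -> 2 / m%:R <= e.
Proof.
move=> e0; exists (Num.truncn (2 / e)).+1 => // m nm.
have m0 : 0 < m%:R :> R by rewrite ltr0n (leq_trans _ nm).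
have lt_m : 2 / e < m%:R by apply: lt_le_trans (truncnS_gt _) _; rewrite ler_nat.
by rewrite ler_pdivrMr // mulrC -ler_pdivrMr // ltW.
Qed.

End Grid.

Section VectorLattice.
Variables (R : realType) (V : lmodType R) (le : V -> V -> Prop) (join : V -> V -> V).
Hypothesis hV : is_vector_lattice le join.

Local Notation meet := (meet join).
Local Notation absv := (absv join).

Lemma vle_refl x : le x x.
Proof. by case: hV => [[refl _ _] _ _ _]. Qed.

Lemma vle_anti x y : le x y -> le y x -> x = y.
Proof. by case: hV => [[_ anti _] _ _ _]; apply: anti. Qed.

Lemma vle_trans y x z : le x y -> le y z -> le x z.
Proof. by case: hV => [[_ _ trans] _ _ _]; apply: trans. Qed.

Lemma vle_add2r z x y : le x y -> le (x + z) (y + z).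
Proof. by case: hV => _ addr _ _; apply: addr. Qed.

Lemma vle_scale (c : R) x y : 0 <= c -> le x y -> le (c *: x) (c *: y).
Proof. by case: hV => _ _ scale _; apply: scale. Qed.

Lemma vjoin_ubl x y : le x (join x y).
Proof. by case: hV => _ _ _ /(_ x y) []. Qed.

Lemma vjoin_ubr x y : le y (join x y).
Proof. by case: hV => _ _ _ /(_ x y) []. Qed.

Lemma vjoin_lub x y z : le x z -> le y z -> le (join x y) z.
Proof. by case: hV => _ _ _ /(_ x y) [_ _ lub]; apply: lub. Qed.

Lemma vle_add2l z x y : le x y -> le (z + x) (z + y).
Proof. by rewrite ![z + _]addrC; apply: vle_add2r. Qed.

Lemma vle_add x y z w : le x y -> le z w -> le (x + z) (y + w).
Proof. by move=> /(vle_add2r z) h /(vle_add2l y); apply: vle_trans. Qed.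

Lemma vsubr_ge0 x y : le 0 (y - x) <-> le x y.
Proof.
split=> [/(vle_add2r x)|/(vle_add2r (- x))]; first by rewrite add0r subrK.
by rewrite subrr.
Qed.

Lemma vsubr_le0 x y : le (x - y) 0 <-> le x y.
Proof.
split=> [/(vle_add2r y)|/(vle_add2r (- y))]; first by rewrite add0r subrK.
by rewrite subrr.
Qed.

Lemma vlerN2 x y : le (- x) (- y) <-> le y x.
Proof. by rewrite -vsubr_ge0 opprK addrC vsubr_ge0. Qed.

Lemma voppr_le0 x : le 0 x -> le (- x) 0.
Proof. by move=> x0; rewrite -oppr0; apply/vlerN2. Qed.

Lemma vaddr_ge0 x y : le 0 x -> le 0 y -> le 0 (x + y).
Proof. by rewrite -{3}[0]addr0; apply: vle_add. Qed.

Lemma vscaler_ge0 (c : R) x : 0 <= c -> le 0 x -> le 0 (c *: x).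
Proof. by move=> c0 /(vle_scale c0); rewrite scaler0. Qed.

Lemma vle_addr x y : le 0 y -> le x (x + y).
Proof. by move=> y0; rewrite -{1}[x]addr0; apply: vle_add2l. Qed.

Lemma vle_addl x y : le 0 y -> le x (y + x).
Proof. by rewrite addrC; apply: vle_addr. Qed.

Lemma vle_scalel (a b : R) x : a <= b -> le 0 x -> le (a *: x) (b *: x).
Proof.
by move=> ab x0; apply/vsubr_ge0; rewrite -scalerBl; apply: vscaler_ge0; rewrite ?subr_ge0.
Qed.

Lemma vjoinC x y : join x y = join y x.
Proof. by apply: vle_anti; apply: vjoin_lub; by [apply: vjoin_ubr|apply: vjoin_ubl]. Qed.

Lemma vjoin_le x y x' y' : le x x' -> le y y' -> le (join x y) (join x' y').
Proof.
move=> hx hy; apply: vjoin_lub.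
- exact: vle_trans hx (vjoin_ubl _ _).
- exact: vle_trans hy (vjoin_ubr _ _).
Qed.

Lemma vjoin_l x y : le y x -> join x y = x.
Proof. by move=> yx; apply: vle_anti (vjoin_ubl _ _); apply: vjoin_lub (vle_refl _) yx. Qed.

Lemma vjoinDr z x y : join x y + z = join (x + z) (y + z).
Proof.
apply: vle_anti; last by apply: vjoin_lub; apply: vle_add2r;
  [apply: vjoin_ubl|apply: vjoin_ubr].
rewrite -[join (x + z) _](subrK z); apply: vle_add2r.
by apply: vjoin_lub; apply/vsubr_ge0; rewrite -addrA -opprD vsubr_ge0 addrC;
  [apply: vjoin_ubl|apply: vjoin_ubr].
Qed.

Lemma vjoinDl z x y : z + join x y = join (z + x) (z + y).
Proof. by rewrite addrC vjoinDr ![z + _]addrC. Qed.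

Lemma vscale_join (c : R) x y : 0 <= c -> c *: join x y = join (c *: x) (c *: y).
Proof.
move=> c0; have [->|cn0] := eqVneq c 0; first by rewrite !scale0r vjoin_l //; apply: vle_refl.
apply: vle_anti; last by apply: vjoin_lub; apply: vle_scale => //;
  [apply: vjoin_ubl|apply: vjoin_ubr].
have ci0 : 0 <= c^-1 by rewrite invr_ge0.
rewrite -[join (c *: x) _](scalerKV cn0); apply: vle_scale => //.
by apply: vjoin_lub; rewrite -[X in le X](scalerK cn0); apply: vle_scale => //;
  [apply: vjoin_ubl|apply: vjoin_ubr].
Qed.

Lemma vmeet_lbl x y : le (meet x y) x.
Proof. by rewrite /meet -vlerN2 opprK; apply: vjoin_ubl. Qed.

Lemma vmeet_lbr x y : le (meet x y) y.
Proof. by rewrite /meet -vlerN2 opprK; apply: vjoin_ubr. Qed.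

Lemma vmeet_glb x y z : le z x -> le z y -> le z (meet x y).
Proof.
by move=> zx zy; rewrite /meet -vlerN2 opprK; apply: vjoin_lub; apply/vlerN2.
Qed.

Lemma vmeetC x y : meet x y = meet y x.
Proof. by rewrite /meet vjoinC. Qed.

Lemma vmeet_le x y x' y' : le x x' -> le y y' -> le (meet x y) (meet x' y').
Proof.
move=> hx hy; apply: vmeet_glb.
- exact: vle_trans (vmeet_lbl _ _) hx.
- exact: vle_trans (vmeet_lbr _ _) hy.
Qed.

Lemma vmeet_l x y : le x y -> meet x y = x.
Proof. by move=> xy; apply: vle_anti (vmeet_lbl _ _) _; apply: vmeet_glb (vle_refl _) xy. Qed.

Lemma vmeetxx x : meet x x = x.
Proof. exact/vmeet_l/vle_refl. Qed.

Lemma vmeetDr z x y : meet x y + z = meet (x + z) (y + z).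
Proof. by rewrite /meet -[z]opprK -opprD vjoinDr -!opprD !opprK. Qed.

Lemma vmeetDl z x y : z + meet x y = meet (z + x) (z + y).
Proof. by rewrite addrC vmeetDr ![z + _]addrC. Qed.

Lemma vscale_meet (c : R) x y : 0 <= c -> c *: meet x y = meet (c *: x) (c *: y).
Proof. by move=> c0; rewrite /meet scalerN vscale_join // !scalerN. Qed.

Lemma vmeet_ge0 x y : le 0 x -> le 0 y -> le 0 (meet x y).
Proof. exact: vmeet_glb. Qed.

Lemma vmeet_eq0_ge0 x y : meet x y = 0 -> le 0 x /\ le 0 y.
Proof. by move=> <-; split; [apply: vmeet_lbl|apply: vmeet_lbr]. Qed.

Lemma vmeetD_le a b c : le 0 a -> le 0 b -> le 0 c ->
  le (meet a (b + c)) (meet a b + meet a c).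
Proof.
move=> a0 b0 c0; rewrite vmeetDr !vmeetDl.
apply: vmeet_glb; apply: vmeet_glb; do ?exact: vmeet_lbr;
  apply: vle_trans (vmeet_lbl _ _) _; by [apply: vle_addr|apply: vle_addl].
Qed.

Lemma vmeetDD_eq0 a a' b b' : le 0 a -> le 0 a' -> le 0 b -> le 0 b' ->
  meet a b = 0 -> meet a b' = 0 -> meet a' b = 0 -> meet a' b' = 0 ->
  meet (a + a') (b + b') = 0.
Proof.
move=> a0 a'0 b0 b'0 ab ab' a'b a'b'.
have meet_sum_le0 c : le 0 c -> meet a c = 0 -> meet a' c = 0 -> le (meet (a + a') c) 0.
  move=> c0 ac a'c; rewrite vmeetC; apply: vle_trans (vmeetD_le c0 a0 a'0) _.
  by rewrite vmeetC ac vmeetC a'c addr0; apply: vle_refl.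
apply: vle_anti; last by apply: vmeet_ge0; apply: vaddr_ge0.
apply: vle_trans (vmeetD_le _ b0 b'0) _; first exact: vaddr_ge0.
by rewrite -[0]addr0; apply: vle_add; apply: meet_sum_le0.
Qed.

Definition vpos x := join x 0.
Definition vneg x := join (- x) 0.

Lemma vpos_ge0 x : le 0 (vpos x). Proof. exact: vjoin_ubr. Qed.
Lemma vneg_ge0 x : le 0 (vneg x). Proof. exact: vjoin_ubr. Qed.

Lemma vnegE x : vneg x = vpos x - x.
Proof. by rewrite /vpos /vneg vjoinDr subrr add0r vjoinC. Qed.

Lemma vpos_subneg x : vpos x - vneg x = x.
Proof. by rewrite vnegE opprB addrC subrK. Qed.

Lemma vmeet_pos_neg x : meet (vpos x) (vneg x) = 0.
Proof.
rewrite vnegE -[X in meet X _]addr0 -vmeetDl.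
by rewrite /meet oppr0 opprK vjoinC subrr.
Qed.

Lemma vpos_id x : le 0 x -> vpos x = x.
Proof. exact: vjoin_l. Qed.

Lemma vneg_id0 x : le 0 x -> vneg x = 0.
Proof. by move=> x0; rewrite /vneg vjoinC vjoin_l //; apply: voppr_le0. Qed.

Lemma vneg_eq0 x : vneg x = 0 -> le 0 x.
Proof. by move=> nx0; rewrite -(vpos_subneg x) nx0 subr0; apply: vpos_ge0. Qed.

Lemma vparts_unique p n : meet p n = 0 -> vpos (p - n) = p /\ vneg (p - n) = n.
Proof.
have joinN u v : join (- u) (- v) = - meet u v by rewrite /meet !opprK.
move=> pn; split.
  by rewrite /vpos -[0](subrr p) -vjoinDl joinN vmeetC pn oppr0 addr0.
by rewrite /vneg opprB -[0](subrr n) -vjoinDl joinN pn oppr0 addr0.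
Qed.

Lemma vjoin_pos x y : join x y = y + vpos (x - y).
Proof. by rewrite /vpos vjoinDl addrC subrK addr0. Qed.

Lemma vabsE x : absv x = vpos x + vneg x.
Proof.
have abs_ge0 : le 0 (absv x).
  have : le 0 (absv x + absv x).
    by rewrite -(addrN x) addrC; apply: vle_add; [apply: vjoin_ubr|apply: vjoin_ubl].
  have half_ge0 : 0 <= 2^-1 :> R by rewrite invr_ge0.
  move/(vle_scale half_ge0); rewrite scaler0 -mulr2n -scaler_nat scalerA.
  by rewrite mulVf ?pnatr_eq0 // scale1r.
rewrite /vpos /vneg vjoinDr add0r vjoinDl addrN addr0.
apply: vle_anti.
  apply: vjoin_lub.
    exact: vle_trans (vjoin_ubr 0 x) (vjoin_ubl _ _).
  exact: vle_trans (vjoin_ubl (- x) 0) (vjoin_ubr _ _).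
by apply: vjoin_lub; apply: vjoin_lub => //; by [apply: vjoin_ubl|apply: vjoin_ubr].
Qed.

Lemma vabs_ge x : le x (absv x). Proof. exact: vjoin_ubl. Qed.
Lemma vabs_geN x : le (- x) (absv x). Proof. exact: vjoin_ubr. Qed.

Lemma vabs_ge0 x : le 0 (absv x).
Proof. by rewrite vabsE; apply: vaddr_ge0; [apply: vpos_ge0|apply: vneg_ge0]. Qed.

Lemma vabs_le x y : le x y -> le (- x) y -> le (absv x) y.
Proof. exact: vjoin_lub. Qed.

Lemma vabs_id x : le 0 x -> absv x = x.
Proof. by move=> x0; rewrite vabsE vpos_id // vneg_id0 // addr0. Qed.

Lemma vpos_le_abs x : le (vpos x) (absv x).
Proof. by rewrite vabsE; apply: vle_addr; apply: vneg_ge0. Qed.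

Lemma vneg_le_abs x : le (vneg x) (absv x).
Proof. by rewrite vabsE; apply: vle_addl; apply: vpos_ge0. Qed.

Lemma vabsN x : absv (- x) = absv x.
Proof. by rewrite /absv opprK vjoinC. Qed.

Lemma vabsD_le x y : le (absv (x + y)) (absv x + absv y).
Proof.
apply: vabs_le; first by apply: vle_add; apply: vabs_ge.
by rewrite opprD; apply: vle_add; apply: vabs_geN.
Qed.

Lemma vabsZ_le (c : R) x : le (absv (c *: x)) (`|c| *: absv x).
Proof.
wlog c0 : c x / 0 <= c.
  move=> hw; have [/hw//|/ltW c0] := lerP 0 c.
  have -> : c *: x = (- c) *: (- x) by rewrite scalerN scaleNr opprK.
  by rewrite -normrN -(vabsN x); apply: hw; rewrite oppr_ge0.
rewrite ger0_norm //; apply: vabs_le; rewrite -?scalerN; apply: vle_scale => //.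
  exact: vabs_ge.
exact: vabs_geN.
Qed.

Lemma vabs_subr_le y z w : le (absv (y - z)) w -> le y (z + w) /\ le z (y + w).
Proof.
move=> yzw; split; apply/vsubr_le0; rewrite opprD addrA.
  by apply/vsubr_le0; apply: vle_trans (vabs_ge _) yzw.
by rewrite -[z - y]opprB; apply/vsubr_le0; apply: vle_trans (vabs_geN _) yzw.
Qed.

Lemma vmeet_abs_le v w : le 0 v ->
  le (meet (v + vpos (w + v)) (absv w)) (v + vpos w).
Proof.
move=> v0; have A0 : le 0 (v + vpos (w + v)) by apply: vaddr_ge0 v0 (vpos_ge0 _).
rewrite vabsE; apply: vle_trans (vmeetD_le A0 (vpos_ge0 _) (vneg_ge0 _)) _.
rewrite addrC; apply: vle_add; last exact: vmeet_lbr.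
have negw_le : le (vneg w - v) (vneg (w + v)).
  rewrite /vneg vjoinDr add0r opprD; apply: vjoin_le; first exact: vle_refl.
  exact: voppr_le0.
have -> : vneg w = v + (vneg w - v) by rewrite addrC subrK.
rewrite -vmeetDl -[X in le _ X]addr0; apply: vle_add2l.
rewrite -(vmeet_pos_neg (w + v)); apply: vmeet_le => //; exact: vle_refl.
Qed.

Definition in_pideal (u z : V) := exists K : R, le (absv z) (K *: u).

Section PrincipalIdeal.
Variable u : V.

Lemma pideal_le (K : R) z : le 0 z -> le z (K *: u) -> in_pideal u z.
Proof. by move=> z0 zK; exists K; rewrite vabs_id. Qed.

Lemma pidealD y z : in_pideal u y -> in_pideal u z -> in_pideal u (y + z).
Proof.
move=> [K1 h1] [K2 h2]; exists (K1 + K2); rewrite scalerDl.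
exact: vle_trans (vabsD_le _ _) (vle_add h1 h2).
Qed.

Lemma pidealZ (c : R) z : in_pideal u z -> in_pideal u (c *: z).
Proof.
move=> [K h]; exists (`|c| * K); rewrite -scalerA.
exact: vle_trans (vabsZ_le _ _) (vle_scale (normr_ge0 _) h).
Qed.

Lemma pidealB y z : in_pideal u y -> in_pideal u z -> in_pideal u (y - z).
Proof. by move=> hy hz; apply: pidealD hy _; rewrite -scaleN1r; apply: pidealZ. Qed.

Lemma pideal_abs z : in_pideal u z -> in_pideal u (absv z).
Proof. by move=> [K h]; exists K; rewrite vabs_id //; apply: vabs_ge0. Qed.

Lemma pideal_pos z : in_pideal u z -> in_pideal u (vpos z).
Proof.
move=> [K h]; exists K; rewrite vabs_id; last exact: vpos_ge0.
exact: vle_trans (vpos_le_abs _) h.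
Qed.

Lemma pideal_neg z : in_pideal u z -> in_pideal u (vneg z).
Proof.
move=> [K h]; exists K; rewrite vabs_id; last exact: vneg_ge0.
exact: vle_trans (vneg_le_abs _) h.
Qed.

End PrincipalIdeal.

Lemma archimedean_le_approx z w u : archimedean le -> le 0 u ->
  (forall e : R, 0 < e -> le z (w + e *: u)) -> le z w.
Proof.
move=> harch u0 zw; apply/vsubr_le0; rewrite -[z - w]vpos_subneg.
suff -> : vpos (z - w) = 0 by rewrite sub0r; apply/voppr_le0/vneg_ge0.
apply: (harch _ u (vpos_ge0 _)) => -[|n]; first by rewrite mulr0n.
have n0 : 0 < n.+1%:R :> R by [].
rewrite -scaler_nat -[u](scalerKV (lt0r_neq0 n0)); apply: vle_scale; first exact: ltW.
apply: vjoin_lub; last by apply: vscaler_ge0 u0; rewrite invr_ge0 ltW.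
by apply/vsubr_le0; rewrite -addrA -opprD; apply/vsubr_le0/zw; rewrite invr_gt0.
Qed.

Definition respects_parts (L : V -> V) d :=
  [/\ le 0 (L (vpos d)), le 0 (L (vneg d)) & meet (L (vpos d)) (L (vneg d)) = 0].

Section AdditiveMap.
Variable L : V -> V.
Hypothesis L_sub : forall y z, L (y - z) = L y - L z.

Let L0 : L 0 = 0.
Proof. by have := L_sub 0 0; rewrite !subrr. Qed.

Let LN z : L (- z) = - L z.
Proof. by rewrite -sub0r L_sub L0 sub0r. Qed.

Let LD y z : L (y + z) = L y + L z.
Proof. by rewrite -{1}[z]opprK L_sub LN opprK. Qed.

Lemma respects_parts_pos d : respects_parts L d -> L (vpos d) = vpos (L d).
Proof.
by move=> [_ _ /vparts_unique[hp _]]; rewrite -[d in RHS]vpos_subneg L_sub hp.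
Qed.

Lemma respects_parts_neg d : respects_parts L d -> L (vneg d) = vneg (L d).
Proof.
by move=> [_ _ /vparts_unique[_ hn]]; rewrite -[d in RHS]vpos_subneg L_sub hn.
Qed.

Lemma respects_parts_abs d : respects_parts L d -> L (absv d) = absv (L d).
Proof.
move=> hd; rewrite !vabsE LD respects_parts_pos // respects_parts_neg //.
Qed.

Lemma respects_parts_join y z : respects_parts L (y - z) ->
  L (join y z) = join (L y) (L z).
Proof. by move=> hyz; rewrite vjoin_pos LD respects_parts_pos // L_sub -vjoin_pos. Qed.

Lemma respects_parts_meet y z : respects_parts L (z - y) ->
  L (meet y z) = meet (L y) (L z).
Proof.
by move=> hyz; rewrite /meet LN respects_parts_join ?LN // opprK addrC.
Qed.

End AdditiveMap.

Section FAlgebra.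
Variable mul : V -> V -> V.
Hypothesis hA : is_real_algebra mul.
Hypothesis mul_ge0 : forall a b, le 0 a -> le 0 b -> le 0 (mul a b).
Hypothesis mul_disjoint : forall a b c, meet a b = 0 -> le 0 c ->
  meet (mul a c) b = 0 /\ meet (mul c a) b = 0.

Lemma vmulA x y z : mul x (mul y z) = mul (mul x y) z.
Proof. by case: hA. Qed.
Lemma vmulDl x y z : mul (x + y) z = mul x z + mul y z.
Proof. by case: hA. Qed.
Lemma vmulDr x y z : mul x (y + z) = mul x y + mul x z.
Proof. by case: hA. Qed.
Lemma vmulZl (c : R) x y : mul (c *: x) y = c *: mul x y.
Proof. by case: hA. Qed.
Lemma vmulZr (c : R) x y : mul x (c *: y) = c *: mul x y.
Proof. by case: hA. Qed.

Lemma vmul0l y : mul 0 y = 0.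
Proof. by have := vmulZl 0 0 y; rewrite !scale0r. Qed.
Lemma vmul0r x : mul x 0 = 0.
Proof. by have := vmulZr 0 x 0; rewrite !scale0r. Qed.
Lemma vmulNl x y : mul (- x) y = - mul x y.
Proof. by rewrite -scaleN1r vmulZl scaleN1r. Qed.
Lemma vmulNr x y : mul x (- y) = - mul x y.
Proof. by rewrite -scaleN1r vmulZr scaleN1r. Qed.
Lemma vmulBl x y z : mul (x - y) z = mul x z - mul y z.
Proof. by rewrite vmulDl vmulNl. Qed.
Lemma vmulBr x y z : mul x (y - z) = mul x y - mul x z.
Proof. by rewrite vmulDr vmulNr. Qed.

Lemma vmul_le2l c x y : le 0 c -> le x y -> le (mul c x) (mul c y).
Proof. by move=> c0 /vsubr_ge0 xy; apply/vsubr_ge0; rewrite -vmulBr; apply: mul_ge0. Qed.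

Lemma vmul_le2r c x y : le 0 c -> le x y -> le (mul x c) (mul y c).
Proof. by move=> c0 /vsubr_ge0 xy; apply/vsubr_ge0; rewrite -vmulBl; apply: mul_ge0. Qed.

Lemma vmul_disjoint x y : meet x y = 0 -> mul x y = 0.
Proof.
move=> xy; have [x0 y0] := vmeet_eq0_ge0 xy.
have yxy : meet y (mul x y) = 0 by rewrite vmeetC; case: (mul_disjoint xy y0).
by have [_] := mul_disjoint yxy x0; rewrite vmeetxx.
Qed.

Lemma vsqr_ge0 z : le 0 (mul z z).
Proof.
have pn := vmeet_pos_neg z; have np : meet (vneg z) (vpos z) = 0 by rewrite vmeetC.
rewrite -(vpos_subneg z) vmulBl !vmulBr (vmul_disjoint pn) (vmul_disjoint np).
rewrite subr0 sub0r opprK.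
by apply: vaddr_ge0; apply: mul_ge0; do ?[exact: vpos_ge0|exact: vneg_ge0].
Qed.

Lemma respects_parts_mull c d : le 0 c -> respects_parts (mul c) d.
Proof.
move=> c0; have pn := vmeet_pos_neg d.
split; [exact/mul_ge0/vpos_ge0|exact/mul_ge0/vneg_ge0|].
have [_ cp_n] := mul_disjoint pn c0.
have n_cp : meet (vneg d) (mul c (vpos d)) = 0 by rewrite vmeetC.
by have [_] := mul_disjoint n_cp c0; rewrite vmeetC.
Qed.

Definition shiftmul (m : R) (c z : V) := m *: z + mul c z.

Lemma shiftmulD m c y z : shiftmul m c (y + z) = shiftmul m c y + shiftmul m c z.
Proof. by rewrite /shiftmul scalerDr vmulDr addrACA. Qed.

Lemma shiftmulB m c y z : shiftmul m c (y - z) = shiftmul m c y - shiftmul m c z.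
Proof. by rewrite /shiftmul scalerBr vmulBr opprD addrACA. Qed.

Lemma shiftmulZ m c (k : R) z : shiftmul m c (k *: z) = k *: shiftmul m c z.
Proof. by rewrite /shiftmul vmulZr scalerDr !scalerA mulrC. Qed.

Lemma shiftmul_le_shift m m' c z : m <= m' -> le 0 z ->
  le (shiftmul m c z) (shiftmul m' c z).
Proof. by move=> mm' z0; apply: vle_add2r; apply: vle_scalel. Qed.

Lemma shiftmul1_ge0 c z : le 0 c -> le 0 z -> le 0 (shiftmul 1 c z).
Proof. by move=> c0 z0; rewrite /shiftmul scale1r; apply: vaddr_ge0 z0 (mul_ge0 c0 z0). Qed.

Lemma shiftmul1_le2 c y z : le 0 c -> le y z -> le (shiftmul 1 c y) (shiftmul 1 c z).
Proof. by move=> c0 /vsubr_ge0 yz; apply/vsubr_ge0; rewrite -shiftmulB; apply: shiftmul1_ge0. Qed.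

Lemma respects_parts_shiftmul1 c d : le 0 c -> respects_parts (shiftmul 1 c) d.
Proof.
move=> c0; have p0 := vpos_ge0 d; have n0 := vneg_ge0 d.
split; try exact: shiftmul1_ge0.
have pn := vmeet_pos_neg d; have np : meet (vneg d) (vpos d) = 0 by rewrite vmeetC.
have [_ cp_n] := mul_disjoint pn c0.
have [_ cn_p] := mul_disjoint np c0.
have n_cp : meet (vneg d) (mul c (vpos d)) = 0 by rewrite vmeetC.
have [_ cn_cp] := mul_disjoint n_cp c0.
rewrite /shiftmul !scale1r; apply: vmeetDD_eq0 => //; do ?exact: mul_ge0 c0 _.
all: by rewrite vmeetC.
Qed.

Lemma mul_shiftmul_eq0 m c w : mul c w = 0 -> mul (shiftmul m c c) w = 0.
Proof. by move=> cw; rewrite /shiftmul vmulDl vmulZl -vmulA cw vmul0r scaler0 addr0. Qed.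

Lemma vmul_shiftmul m c w : mul c (shiftmul m c w) = mul (shiftmul m c c) w.
Proof. by rewrite /shiftmul vmulDr vmulDl vmulZr vmulZl vmulA. Qed.

Lemma vmul_le_annih c y z (k : R) : le 0 c -> le 0 y -> le y (k *: z) ->
  mul c z = 0 -> mul c y = 0.
Proof.
move=> c0 y0 yz cz; apply: vle_anti (mul_ge0 c0 y0).
by rewrite -(scaler0 _ k) -cz -vmulZr; apply: vmul_le2l.
Qed.

Hypothesis hsemi : semiprime mul.

Lemma semiprime_annihl v w : le 0 w -> le w v -> mul v w = 0 -> w = 0.
Proof.
move=> w0 wv vw; apply: hsemi; exists 1%N => /=.
by apply: vle_anti (mul_ge0 w0 w0); rewrite -vw; apply: vmul_le2r.
Qed.

Lemma semiprime_annihr v w : le 0 w -> le w v -> mul w v = 0 -> w = 0.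
Proof.
move=> w0 wv wv0; apply: hsemi; exists 1%N => /=.
by apply: vle_anti (mul_ge0 w0 w0); rewrite -wv0; apply: vmul_le2l.
Qed.

(* [c y >= 0] forces [c y^- = 0], and semiprimeness turns [y^- <= v] with
   [v y^- = 0] into [y^- = 0]. *)
Lemma semiprime_ge0 c v y : le 0 c -> le 0 (mul c y) -> le (vneg y) v ->
  (forall w, mul c w = 0 -> mul v w = 0) -> le 0 y.
Proof.
move=> c0 cy0 nyv cv; apply: vneg_eq0; apply: semiprime_annihl (vneg_ge0 _) nyv _.
apply: cv; rewrite (respects_parts_neg (vmulBr c)) ?vneg_id0 //.
exact: respects_parts_mull.
Qed.

Hypothesis harch : archimedean le.

Section ShiftedDivision.
Variables (x : V) (mu : R).
Hypothesis x_ge0 : le 0 x.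
Hypothesis mu_le1 : mu <= 1.
Hypothesis hx : le 0 (mul x x + (mu - 1) *: x).

Local Notation T := (shiftmul mu x).
Local Notation S := (shiftmul 1 x).
Local Notation U := (shiftmul 1 x x).
Local Notation Y := (shiftmul mu x x).

Lemma Y_sub_ge0 : le 0 (Y - x).
Proof.
have -> : Y - x = mul x x + (mu - 1) *: x.
  by rewrite /shiftmul scalerBl scale1r addrAC addrC.
exact: hx.
Qed.

Lemma Y_ge0 : le 0 Y.
Proof. by rewrite -(subrK x Y); apply: vaddr_ge0 Y_sub_ge0 x_ge0. Qed.

(* Where [x] vanishes, [T z = mu z] can be negative; membership in the ideal
   generated by [U] excludes this. *)
Lemma T_ge0 z : le 0 z -> in_pideal U z -> le 0 (T z).
Proof.
move=> z0 [K zK]; rewrite vabs_id // in zK.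
set y := mul x z + (mu - 1) *: z.
have -> : T z = y + z by rewrite /y /shiftmul scalerBl scale1r -addrA subrK addrC.
suff y0 : le 0 y by apply: vaddr_ge0.
have mu0 : 0 <= 1 - mu by rewrite subr_ge0.
apply: (@semiprime_ge0 x (((1 - mu) * K) *: U)) => //.
- by rewrite /y vmulDr vmulZr vmulA -vmulZl -vmulDl; apply: mul_ge0.
- apply: vjoin_lub; last by apply: vle_trans (vscaler_ge0 mu0 z0) _;
    rewrite -scalerA; apply: vle_scale.
  rewrite -scalerA; apply: vle_trans (vle_scale mu0 zK).
  rewrite /y opprD -scaleNr opprB addrC; apply/vsubr_ge0.
  by rewrite opprD opprK addrA subrr add0r; apply: mul_ge0.
- by move=> w xw; rewrite vmulZl mul_shiftmul_eq0 ?scaler0.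
Qed.

Lemma T_le_S z : le 0 z -> le (T z) (S z).
Proof. exact: shiftmul_le_shift. Qed.

Lemma respects_parts_T d : in_pideal U d -> respects_parts T d.
Proof.
move=> hd; have Tp0 := T_ge0 (vpos_ge0 d) (pideal_pos hd).
have Tn0 := T_ge0 (vneg_ge0 d) (pideal_neg hd).
split=> //; apply: vle_anti (vmeet_ge0 Tp0 Tn0).
have [_ _ <-] := respects_parts_shiftmul1 d x_ge0.
by apply: vmeet_le; apply: T_le_S; [apply: vpos_ge0|apply: vneg_ge0].
Qed.

Lemma T_le2 y z : in_pideal U y -> in_pideal U z -> le y z -> le (T y) (T z).
Proof.
move=> hy hz /vsubr_ge0 yz; apply/vsubr_ge0; rewrite -shiftmulB.
exact: T_ge0 yz (pidealB hz hy).
Qed.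

Lemma pideal_x : in_pideal U x.
Proof.
apply: (pideal_le (K := 1)) => //.
by rewrite scale1r /shiftmul scale1r; apply: vle_addr; apply: vsqr_ge0.
Qed.

Lemma pideal_Y : in_pideal U Y.
Proof.
apply: pidealD; first exact: pidealZ pideal_x.
apply: (pideal_le (K := 1)); first exact: vsqr_ge0.
by rewrite scale1r /shiftmul scale1r; apply: vle_addl.
Qed.

(* The identities between [E], [W] and [Q] below are ring identities between
   the coefficients on [x], [Y] and [T Y]. *)
Definition lincomb (a b c : R) := a *: x + b *: Y + c *: T Y.

Lemma lincombD a b c a' b' c' :
  lincomb a b c + lincomb a' b' c' = lincomb (a + a') (b + b') (c + c').
Proof. by rewrite /lincomb !scalerDl addrACA (addrACA (a *: x)). Qed.

Lemma lincombZ k a b c : k *: lincomb a b c = lincomb (k * a) (k * b) (k * c).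
Proof. by rewrite /lincomb !scalerDr !scalerA. Qed.

Lemma lincombB a b c a' b' c' :
  lincomb a b c - lincomb a' b' c' = lincomb (a - a') (b - b') (c - c').
Proof. by rewrite -scaleN1r lincombZ lincombD !mulN1r. Qed.

Lemma lincomb_x : x = lincomb 1 0 0.
Proof. by rewrite /lincomb !scale0r !addr0 scale1r. Qed.

Lemma lincomb_Y : Y = lincomb 0 1 0.
Proof. by rewrite /lincomb !scale0r addr0 add0r scale1r. Qed.

Lemma lincomb_TY : T Y = lincomb 0 0 1.
Proof. by rewrite /lincomb !scale0r !add0r scale1r. Qed.

Lemma T_lincomb a b : T (lincomb a b 0) = lincomb 0 a b.
Proof. by rewrite /lincomb !scale0r !addr0 add0r shiftmulD !shiftmulZ. Qed.

Lemma pideal_lincomb a b : in_pideal U (lincomb a b 0).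
Proof.
rewrite /lincomb scale0r addr0.
by apply: pidealD; apply: pidealZ; [apply: pideal_x|apply: pideal_Y].
Qed.

(* Pointwise [E s = (2 s - s^2 (mu + x)) x], maximal for [s = 1 / (mu + x)],
   with value [x / (mu + x)]. *)
Definition E s := lincomb (2 * s) (- s ^+ 2) 0.

Lemma E0 : E 0 = 0.
Proof. by rewrite /E /lincomb expr0n mulr0 oppr0 !scale0r !addr0. Qed.

Lemma E_le s s' : 0 <= s' -> s' <= s -> le (E s) (E s' + (2 * (s - s')) *: x).
Proof.
move=> s'0 s's; apply/vsubr_ge0.
have -> : E s' + (2 * (s - s')) *: x - E s = (s ^+ 2 - s' ^+ 2) *: Y.
  by rewrite /E lincomb_Y lincomb_x !lincombZ lincombD lincombB; congr lincomb; ring.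
by apply: vscaler_ge0 Y_ge0; rewrite subr_ge0; nra.
Qed.

Lemma E_le2x s : 0 <= s <= 1 -> le (E s) (2 *: x).
Proof.
case/andP=> s0 s1; apply: vle_trans (E_le (lexx 0) s0) _.
by rewrite E0 add0r subr0; apply: vle_scalel => //; nra.
Qed.

Definition W s := x - s *: Y.

(* Pointwise [Q s = x (1 - s (mu + x))^2 = (W s)^2 / x]. *)
Definition Q s := W s - s *: T (W s).

Lemma x_sub_TE s : x - T (E s) = Q s.
Proof.
have W_lincomb : W s = lincomb 1 (- s) 0.
  by rewrite /W lincomb_Y lincomb_x lincombZ lincombB; congr lincomb; ring.
rewrite /Q /E W_lincomb !T_lincomb lincomb_x lincombZ !lincombB.
by congr lincomb; ring.
Qed.

Lemma Q_add s : Q s + (2 * s) *: Y = x + s ^+ 2 *: T Y.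
Proof.
rewrite /Q /W shiftmulB shiftmulZ lincomb_TY lincomb_Y lincomb_x.
by rewrite !(lincombZ, lincombB, lincombD); congr lincomb; ring.
Qed.

Lemma Q_ge0 s : 0 <= s <= 1 -> le 0 (Q s).
Proof.
case/andP=> s0 s1; apply: (@semiprime_ge0 x (2 *: Y)) => //.
- rewrite /Q vmulBr vmulZr vmul_shiftmul -vmulZl -vmulBl; exact: vsqr_ge0.
- apply: vjoin_lub; last exact: vscaler_ge0 Y_ge0.
  have -> : - Q s = (2 * s) *: Y - (x + s ^+ 2 *: T Y).
    by rewrite -Q_add [Q s + _]addrC [- (_ + Q s)]opprD addrA subrr add0r.
  apply: vle_trans (_ : le _ ((2 * s) *: Y)) _; last by apply: vle_scalel Y_ge0; nra.
  apply/vsubr_ge0; rewrite opprB addrC subrK.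
  by apply: vaddr_ge0 x_ge0 (vscaler_ge0 (sqr_ge0 _) _); apply: T_ge0 Y_ge0 pideal_Y.
- by move=> w xw; rewrite vmulZl mul_shiftmul_eq0 ?scaler0.
Qed.

Lemma TE_le s : 0 <= s <= 1 -> le (T (E s)) x.
Proof. by move=> s01; apply/vsubr_ge0; rewrite x_sub_TE; apply: Q_ge0. Qed.

Lemma Q_le_S s : 0 <= s <= 1 -> le (Q s) (2 *: S (absv (W s))).
Proof.
case/andP=> s0 s1.
have hW : in_pideal U (W s) by apply: pidealB pideal_x (pidealZ _ pideal_Y).
have absW0 := vabs_ge0 (W s).
have TW0 : le 0 (T (absv (W s))) by apply: T_ge0 absW0 (pideal_abs hW).
rewrite -[2]/(1 + 1) scalerDl scale1r /Q; apply: vle_add.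
  apply: vle_trans (vabs_ge _) _; rewrite /shiftmul scale1r.
  by apply: vle_addr; apply: mul_ge0.
rewrite -scalerN; apply: vle_trans (vle_scale s0 (vabs_geN _)) _.
rewrite -(respects_parts_abs (shiftmulB _ _) (respects_parts_T hW)).
apply: vle_trans (vle_scalel s1 TW0) _; rewrite scale1r.
exact: T_le_S.
Qed.

Fixpoint Emax (N k : nat) : V :=
  if k is k'.+1 then join (Emax N k') (E (gridpt N k)) else E 0.

Lemma Emax_ub N j k : (j <= k)%N -> le (E (gridpt N j)) (Emax N k).
Proof.
elim: k => [|k IHk].
  by rewrite leqn0 => /eqP->; rewrite gridpt0; apply: vle_refl.
rewrite leq_eqVlt => /orP[/eqP->|/IHk]; first exact: vjoin_ubr.
by move/vle_trans; apply; apply: vjoin_ubl.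
Qed.

Lemma Emax_lub N k w : (forall j, (j <= k)%N -> le (E (gridpt N j)) w) ->
  le (Emax N k) w.
Proof.
elim: k => [|k IHk] Ew; first by have := Ew 0%N (leqnn 0); rewrite gridpt0.
by apply: vjoin_lub; [apply: IHk => j jk; apply: Ew; apply: leqW|apply: Ew].
Qed.

Lemma Emax_ge0 N k : le 0 (Emax N k).
Proof. by rewrite -E0 -(@gridpt0 R N); apply: Emax_ub. Qed.

Lemma Emax_le2x N k : (0 < N)%N -> (k <= N)%N -> le (Emax N k) (2 *: x).
Proof.
move=> N0 kN; apply: Emax_lub => j jk; apply: E_le2x.
by apply: gridpt_itv (leq_trans jk kN).
Qed.

Lemma pideal_Emax N k : (0 < N)%N -> (k <= N)%N -> in_pideal U (Emax N k).
Proof.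
move=> N0 kN; apply: (pideal_le (K := 2)); first exact: Emax_ge0.
apply: vle_trans (Emax_le2x N0 kN) (vle_scale _ _) => //.
by rewrite /shiftmul scale1r; apply: vle_addr; apply: vsqr_ge0.
Qed.

Lemma T_Emax_le N k : (0 < N)%N -> (k <= N)%N -> le (T (Emax N k)) x.
Proof.
move=> N0; elim: k => [|k IHk] kN /=; first by apply: TE_le; rewrite lexx ler01.
rewrite (respects_parts_join (shiftmulB _ _)); last first.
  apply: respects_parts_T; apply: pidealB (pideal_Emax N0 (ltnW kN)) _.
  exact: pideal_lincomb.
by apply: vjoin_lub; [apply: IHk; apply: ltnW|apply: TE_le; apply: gridpt_itv].
Qed.

Lemma E_le_Emax N s : (0 < N)%N -> 0 <= s <= 1 ->
  le (E s) (Emax N N + (2 / N%:R) *: x).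
Proof.
move=> N0 s01; have [j jN /andP[js sj]] := gridpt_approx N0 s01.
have /andP[j0 _] := gridpt_itv (R := R) N0 jN.
apply: vle_trans (E_le j0 js) _; apply: vle_add; first exact: Emax_ub.
by apply: vle_scalel x_ge0; lra.
Qed.

Lemma Emax_le_Emax N M : (0 < N)%N -> (0 < M)%N ->
  le (Emax M M) (Emax N N + (2 / N%:R) *: x).
Proof.
by move=> N0 M0; apply: Emax_lub => j jM; apply: E_le_Emax => //; apply: gridpt_itv.
Qed.

Lemma Emax_cauchy : ru_cauchy le join (fun n => Emax n n).
Proof.
exists x; split=> // e e0; have [N N0 smallN] := two_div_nat_le_eventually e0.
have diff_le n m : (N <= n)%N -> (N <= m)%N -> le (Emax n n - Emax m m) (e *: x).
  move=> Nn Nm; have m0 := leq_trans N0 Nm; apply/vsubr_le0.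
  rewrite -addrA -opprD; apply/vsubr_le0.
  apply: vle_trans (Emax_le_Emax m0 (leq_trans N0 Nn)) _.
  by apply: vle_add2l; apply: vle_scalel x_ge0; apply: smallN.
exists N => n m Nn Nm; apply: vabs_le; first exact: diff_le.
by rewrite opprB; apply: diff_le.
Qed.

Lemma W_step s t : W s = W (s + t) + t *: Y.
Proof. by rewrite /W scalerDl opprD addrA subrK. Qed.

Fixpoint Wmin (N k : nat) : V :=
  if k is k'.+1 then meet (Wmin N k') (absv (W (gridpt N k))) else absv (W 0).

Lemma Wmin_le n k : le (Wmin n k) (n%:R^-1 *: Y + vpos (W (gridpt n k))).
Proof.
have Yn0 : le 0 (n%:R^-1 *: Y) by apply: vscaler_ge0 Y_ge0; rewrite invr_ge0.
elim: k => [|k IHk] /=.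
  rewrite gridpt0 /W scale0r subr0 vabs_id // vpos_id //; exact: vle_addl.
apply: vle_trans (vmeet_le IHk (vle_refl _)) _.
by rewrite (W_step (gridpt n k) n%:R^-1) -gridptS; apply: vmeet_abs_le.
Qed.

Lemma vpos_W1 : vpos (W 1) = 0.
Proof.
rewrite /W scale1r /vpos vjoinC vjoin_l //.
by rewrite -oppr0 -opprB; apply/vlerN2/Y_sub_ge0.
Qed.

Lemma S_meet y z : S (meet y z) = meet (S y) (S z).
Proof. exact/respects_parts_meet/respects_parts_shiftmul1/x_ge0/shiftmulB. Qed.

Section Limit.
Variables b u0 : V.
Hypothesis u0_ge0 : le 0 u0.
Hypothesis b_lim : forall e : R, 0 < e -> exists N, forall n,
  (N <= n)%N -> le (absv (Emax n n - b)) (e *: u0).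

Lemma E_le_lim s : 0 <= s <= 1 -> le (E s) b.
Proof.
move=> s01; apply: (archimedean_le_approx harch (vaddr_ge0 u0_ge0 x_ge0)) => e e0.
have [N1 hN1] := b_lim e0; have [N2 N20 smallN2] := two_div_nat_le_eventually e0.
set m := maxn N2 N1; have m0 : (0 < m)%N := leq_trans N20 (leq_maxl _ _).
apply: vle_trans (E_le_Emax m0 s01) _; rewrite scalerDr addrA.
apply: vle_add; first exact: (vabs_subr_le (hN1 _ (leq_maxr _ _))).1.
by apply: vle_scalel x_ge0; apply: smallN2; apply: leq_maxl.
Qed.

Lemma lim_le_Emax n : (0 < n)%N -> le b (Emax n n + (2 / n%:R) *: x).
Proof.
move=> n0; apply: (archimedean_le_approx harch u0_ge0) => e e0.
have [N1 hN1] := b_lim e0; set m := maxn 1 N1.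
apply: vle_trans (vabs_subr_le (hN1 _ (leq_maxr _ _))).2 _.
by apply: vle_add2r; apply: Emax_le_Emax => //; apply: leq_maxl.
Qed.

Lemma lim_ge0 : le 0 b.
Proof. by rewrite -E0; apply: E_le_lim; rewrite lexx ler01. Qed.

Lemma lim_le4x : le b (4 *: x).
Proof.
apply: vle_trans (lim_le_Emax (isT : 0 < 1)%N) _.
have -> : (4 : R) *: x = 2 *: x + (2 / 1%:R) *: x.
  by rewrite -scalerDl divr1; congr (_ *: _); lra.
by apply: vle_add2r; apply: Emax_le2x.
Qed.

Lemma pideal_lim : in_pideal U b.
Proof.
apply: (pideal_le (K := 4)); first exact: lim_ge0.
apply: vle_trans lim_le4x (vle_scale _ _) => //.
by rewrite /shiftmul scale1r; apply: vle_addr; apply: vsqr_ge0.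
Qed.

Lemma T_lim_le : le (T b) x.
Proof.
apply: (archimedean_le_approx harch Y_ge0) => e e0.
have [n n0 smalln] := two_div_nat_le_eventually e0.
have hEn : in_pideal U (Emax n n + (2 / n%:R) *: x).
  exact: pidealD (pideal_Emax n0 (leqnn n)) (pidealZ _ pideal_x).
apply: vle_trans (T_le2 pideal_lim hEn (lim_le_Emax n0)) _.
rewrite shiftmulD shiftmulZ; apply: vle_add; first exact: T_Emax_le.
by apply: vle_scalel Y_ge0; apply: smalln.
Qed.

Lemma x_sub_T_lim_le_W s : 0 <= s <= 1 -> le (x - T b) (2 *: S (absv (W s))).
Proof.
move=> s01; apply: vle_trans (Q_le_S s01); rewrite -x_sub_TE.
apply: vle_add2l; apply/vlerN2; apply: T_le2 (pideal_lim) (E_le_lim s01).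
exact: pideal_lincomb.
Qed.

Lemma x_sub_T_lim_le n k : (0 < n)%N -> (k <= n)%N ->
  le (x - T b) (2 *: S (Wmin n k)).
Proof.
move=> n0; elim: k => [|k IHk] kn /=.
  rewrite -(@gridpt0 R n); apply: x_sub_T_lim_le_W; exact: gridpt_itv.
rewrite S_meet vscale_meet //; apply: vmeet_glb; first by apply: IHk; apply: ltnW.
by apply: x_sub_T_lim_le_W; apply: gridpt_itv.
Qed.

Lemma T_lim_ge : le x (T b).
Proof.
apply/vsubr_le0; apply: (archimedean_le_approx harch (shiftmul1_ge0 x_ge0 Y_ge0)).
move=> e e0; have [n n0 smalln] := two_div_nat_le_eventually e0.
apply: vle_trans (x_sub_T_lim_le n0 (leqnn n)) _; rewrite add0r.
have Yn0 : le 0 (n%:R^-1 *: Y) by apply: vscaler_ge0 Y_ge0; rewrite invr_ge0.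
apply: vle_trans (vle_scale _ (shiftmul1_le2 x_ge0 (Wmin_le n n))) _ => //.
rewrite gridptNN // vpos_W1 addr0 shiftmulZ scalerA.
by apply: vle_scalel (shiftmul1_ge0 x_ge0 Y_ge0); exact: smalln.
Qed.

End Limit.

Lemma shifted_division : ru_complete le join ->
  exists b, [/\ T b = x, le 0 b & le b (4 *: x)].
Proof.
move=> hcomp; have [b [u0 [u0_ge0 b_lim]]] := hcomp _ Emax_cauchy.
exists b; split; last exact: lim_le4x u0_ge0 b_lim.
- exact: vle_anti (T_lim_le u0_ge0 b_lim) (T_lim_ge u0_ge0 b_lim).
- exact: lim_ge0 u0_ge0 b_lim.
Qed.

End ShiftedDivision.

Lemma vle_abs_annih p n f g : le 0 p -> mul p n = 0 -> mul p g = 0 ->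
  le (p + n) (absv (f + g)) -> le p (absv f).
Proof.
move=> p0 pn pg hpn.
have mul_abs z : mul p (absv z) = absv (mul p z).
  exact: (respects_parts_abs (vmulBr p) (respects_parts_mull z p0)).
have pp_le : le (mul p p) (mul p (absv f)).
  have := vmul_le2l p0 hpn.
  by rewrite !mul_abs !vmulDr pn pg !addr0.
apply/vsubr_ge0; apply: (@semiprime_ge0 p p) => //.
- by rewrite vmulBr; apply/vsubr_ge0.
- apply: vjoin_lub => //; rewrite opprB; apply/vsubr_ge0.
  by rewrite opprB addrC subrK; apply: vabs_ge0.
Qed.

Lemma double_le_sqr p : le 0 p -> le p (absv (mul p p - p)) -> le (2 *: p) (mul p p).
Proof.
move=> p0 pf; set f := mul p p - p; set w := vneg f.
have w0 : le 0 w := vneg_ge0 f.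
have w_fpos : mul w (vpos f) = 0.
  by apply: vmul_disjoint; rewrite vmeetC vmeet_pos_neg.
have wp_le : le (mul w p) (mul w w).
  by have := vmul_le2l w0 pf; rewrite vabsE vmulDr w_fpos add0r.
have wf_eq : mul w f = - mul w w.
  by rewrite -[f in LHS]vpos_subneg vmulBr w_fpos sub0r.
have wpp0 : mul w (mul p p) = 0.
  apply: vle_anti (mul_ge0 w0 (vsqr_ge0 p)).
  have -> : mul p p = f + p by rewrite subrK.
  by rewrite vmulDr wf_eq addrC; apply/vsubr_le0; exact: wp_le.
have w_le_p : le w p.
  apply: vjoin_lub => //; rewrite opprB; apply/vsubr_ge0.
  by rewrite opprB addrC subrK; apply: vsqr_ge0.
have wp0 : mul w p = 0.
  apply: (@semiprime_annihr (mul p p)); first exact: mul_ge0.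
    exact: vmul_le2r.
  by rewrite -vmulA [mul p (mul p p)]vmulA vmulA wpp0 vmul0l.
have f0 : le 0 f by apply: vneg_eq0; apply: (semiprime_annihr w0 w_le_p wp0).
rewrite vabs_id // in pf; apply/vsubr_ge0.
by rewrite scaler_nat mulr2n opprD addrA; apply/vsubr_ge0.
Qed.

Lemma f_algebra_bounded_qi_closed : ru_complete le join -> bounded_qi_closed mul le join.
Proof.
move=> hcomp a; rewrite vabsE; set p := vpos a; set n := vneg a.
have -> : a = p - n by rewrite vpos_subneg.
move=> habs.
have p0 : le 0 p := vpos_ge0 a; have n0 : le 0 n := vneg_ge0 a.
have pn : mul p n = 0 := vmul_disjoint (vmeet_pos_neg a).
have np : mul n p = 0 by apply: vmul_disjoint; rewrite vmeetC vmeet_pos_neg.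
have png : mul p (mul n n + n) = 0 by rewrite vmulDr vmulA pn vmul0l addr0.
have sqr_split : mul (p - n) (p - n) - (p - n) = mul p p - p + (mul n n + n).
  rewrite vmulBl !vmulBr pn np subr0 sub0r opprK opprB.
  by rewrite [n - p]addrC addrACA.
rewrite sqr_split in habs.
have hp : le 0 (mul p p + (-1 - 1) *: p).
  rewrite -opprD scaleNr; apply/vsubr_ge0.
  exact: double_le_sqr p0 (vle_abs_annih p0 pn png habs).
have hn : le 0 (mul n n + (1 - 1) *: n) by rewrite subrr scale0r addr0; apply: vsqr_ge0.
have N1_le1 : -1 <= 1 :> R by lra.
have [bp [bp_eq bp0 bp4]] := shifted_division p0 N1_le1 hp hcomp.
have [bn [bn_eq bn0 bn4]] := shifted_division n0 (lexx 1) hn hcomp.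
have pbn : mul p bn = 0 := vmul_le_annih p0 bn0 bn4 pn.
have nbp : mul n bp = 0 := vmul_le_annih n0 bp0 bp4 np.
have pbp : mul p bp = p + bp by rewrite -[p in RHS]bp_eq /shiftmul scaleN1r addrC addNKr.
have nbn : mul n bn = n - bn by rewrite -[n in RHS]bn_eq /shiftmul scale1r addrC addKr.
exists (bp + bn); rewrite vmulDr !vmulBl pbp nbn pbn nbp subr0 sub0r opprB.
by rewrite addrACA [- n + _]addrC.
Qed.

End FAlgebra.

End VectorLattice.

Theorem theorem3 (R : realType) (V : lmodType R)
  (mul : V -> V -> V) (le : V -> V -> Prop) (join : V -> V -> V) :
  is_f_algebra mul le join ->
  archimedean le ->
  semiprime mul ->
  ru_complete le join ->
  forall a : V, le (absv join a) (absv join (mul a a - a)) ->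
    exists a' : V, a + a' = mul a a'.
Proof.
move=> [hA hV mul_ge0 mul_disjoint] harch hsemi hcomp.
exact: (f_algebra_bounded_qi_closed hV hA mul_ge0 mul_disjoint hsemi harch hcomp).
Qed.
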